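(* Let $V$ be a subset of $\mathbb{R}^n$ and $W$ a nonempty subset of $\mathbb{R}^m$. Let $f_1,\ldots,f_n\in\overline{\boldsymbol{T}(Y_1,\ldots,Y_m)}/\boldsymbol{E}(W)$ and suppose that the image of $\theta:W\to\boldsymbol{T}^n$, $y\mapsto(f_1(y),\ldots,f_n(y))$, is contained in $V$. Let $\theta^\ast:\overline{\boldsymbol{T}(X_1,\ldots,X_n)}/\boldsymbol{E}(V)\to F(W,\boldsymbol{T})$, $f\mapsto f\circ\theta$. Then: (1) $V\neq\varnothing$; (2) $\operatorname{Im}(\theta^\ast)\subset\overline{\boldsymbol{T}(Y_1,\ldots,Y_m)}/\boldsymbol{E}(W)\subset F(W,\boldsymbol{T})$; (3) $\theta^\ast$ is a $\boldsymbol{T}$-algebra homomorphism; (4) if $\operatorname{Im}(\theta)\supset V$, then $\theta^\ast$ is injective; (5) if $V$ and $W$ are homeomorphic via $\theta$ and there exist $g_1,\ldots,g_m\in\overline{\boldsymbol{T}(X_1,\ldots,X_n)}/\boldsymbol{E}(V)$ such that $\theta^{-1}(x)=(g_1(x),\ldots,g_m(x))$ for all $x\in V$, then $\overline{\boldsymbol{T}(X_1,\ldots,X_n)}/\boldsymbol{E}(V)$ and $\overline{\boldsymbol{T}(Y_1,\ldots,Y_m)}/\boldsymbol{E}(W)$ are isomorphic via $\theta^\ast$.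
   Context: $\boldsymbol{T}=\mathbb{R}\cup\{-\infty\}$ with $a\oplus b=\max\{a,b\}$, $a\odot b=a+b$. Semirings are commutative with $0,1$; $\boldsymbol{T}$-algebras are semirings with a semiring homomorphism from $\boldsymbol{T}$, and $\boldsymbol{T}$-algebra homomorphisms are compatible semiring homomorphisms (isomorphism = bijective one). $\overline{\boldsymbol{T}[X_1,\ldots,X_n]}$ is the tropical polynomial semiring modulo identifying polynomials defining the same function $\boldsymbol{T}^n\to\boldsymbol{T}$; it is cancellative and $\overline{\boldsymbol{T}(X_1,\ldots,X_n)}$ is its semifield of fractions. Each element defines a function $\mathbb{R}^n\to\boldsymbol{T}$ (quotients evaluated as differences). For $V\subset\mathbb{R}^n$, $\boldsymbol{E}(V)=\{(f,g)\mid f(x)=g(x)\ \forall x\in V\}$ is a congruence (an equivalence relation compatible with both operations) on $\overline{\boldsymbol{T}(X_1,\ldots,X_n)}$, and an element of the quotient $\overline{\boldsymbol{T}(X_1,\ldots,X_n)}/\boldsymbol{E}(V)$ is evaluated at $x\in V$ via any representative (well defined), so it defines a function $V\to\boldsymbol{T}$. $F(W,\boldsymbol{T})$ is the $\boldsymbol{T}$-algebra of all functions $W\to\boldsymbol{T}$ with pointwise operations, and $\overline{\boldsymbol{T}(Y_1,\ldots,Y_m)}/\boldsymbol{E}(W)$ is regarded as a subset of it via evaluation. *)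

From HB Require Import structures.
From mathcomp Require Import all_boot all_order all_algebra.
From mathcomp Require Import all_classical all_reals all_analysis.
From mathcomp Require Import Rstruct Rstruct_topology.
Set Implicit Arguments. Unset Strict Implicit. Unset Printing Implicit Defensive.
Import Order.TTheory GRing.Theory Num.Theory.
Local Open Scope classical_set_scope.
Local Open Scope ring_scope.

Notation RR := Rdefinitions.R.

(** The tropical semifield T = R ∪ {-oo}; [None] is -oo. *)
Definition T := option RR.

Definition tadd (a b : T) : T :=
  match a, b with
  | None, _ => b
  | _, None => a
  | Some x, Some y => Some (Num.max x y)
  end.

Definition tmul (a b : T) : T :=
  match a, b with
  | Some x, Some y => Some (x + y)
  | _, _ => None
  end.

(** A tropical monomial c ⊙ X^a (c real, a ∈ N^n) and a tropical polynomial,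
    given as a finite list of monomials (the empty list is the zero polynomial -oo). *)
Definition tmono (n : nat) := (RR * {ffun 'I_n -> nat})%type.
Definition tpoly (n : nat) := seq (tmono n).

Definition mono_eval n (t : tmono n) (x : 'rV[RR]_n) : RR :=
  t.1 + \sum_(i < n) (t.2 i)%:R * x ord0 i.

Definition peval n (p : tpoly n) (x : 'rV[RR]_n) : T :=
  foldr (fun t acc => tadd (Some (mono_eval t x)) acc) None p.

(** A representative p/q of an element of the semifield of fractions of
    \overline{T[X_1..X_n]}: the denominator q is a nonzero polynomial. *)
Record trat (n : nat) := Trat {
  tnum : tpoly n;
  tden : tpoly n;
  tden_nz : tden <> [::] }.

Definition reval n (r : trat n) (x : 'rV[RR]_n) : T :=
  match peval (tnum r) x, peval (tden r) x with
  | Some a, Some b => Some (a - b)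
  | _, _ => None
  end.

(** \overline{T(X_1..X_n)}/E(V), realised (via evaluation, which is injective on
    the quotient by definition of E(V)) as a subset of F(V,T) = (V -> T). *)
Definition QT n (V : set 'rV[RR]_n) : set (V -> T) :=
  [set h | exists r : trat n, forall x : V, h x = reval r (\val x)].

Definition fadd (A : Type) (h h' : A -> T) (x : A) : T := tadd (h x) (h' x).
Definition fmul (A : Type) (h h' : A -> T) (x : A) : T := tmul (h x) (h' x).
Definition fconst (A : Type) (c : T) (x : A) : T := c.
Arguments QT {n} V _ : assert.
Arguments fconst A c x : clear implicits.
Arguments fadd {A} h h' _.
Arguments fmul {A} h h' _.

From HB Require Import structures.
From mathcomp Require Import all_boot all_order all_algebra.
From mathcomp Require Import all_classical all_reals all_analysis.
From mathcomp Require Import Rstruct Rstruct_topology lra.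
Import Order.TTheory GRing.Theory Num.Theory.
Local Open Scope classical_set_scope.
Local Open Scope ring_scope.
Set Implicit Arguments. Unset Strict Implicit.

(* Pulling a function on V back along theta amounts to substituting the
   tropical rational functions f_1, ..., f_n for the variables X_1, ..., X_n.
   Tropical rational functions on W contain the constants and are closed under
   ⊕, ⊙ and division by functions that never take the value -oo; since a
   monomial c ⊙ X^a is a ⊙-product of a constant and ⊙-powers of the X_i,
   the substitution stays among the tropical rational functions on W.  The
   operations of F(-, T) are pointwise, so the pullback respects them; it is
   injective when theta is onto V, and when theta has an inverse psi given by
   tropical rational functions g_j, any k on W is the pullback of k \o psi. *)

Definition tdiv (a b : T) : T :=
  match a, b with
  | Some a, Some b => Some (a - b)
  | _, _ => None
  end.

Lemma taddA : associative tadd.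
Proof. by case=> [a|] [b|] [c|] //=; rewrite maxA. Qed.

Lemma tmulC : commutative tmul.
Proof. by case=> [a|] [b|] //=; rewrite addrC. Qed.

Lemma tmul_taddr : right_distributive tmul tadd.
Proof. by case=> [a|] [b|] [c|] //=; rewrite addr_maxr. Qed.

Lemma tmul_taddl : left_distributive tmul tadd.
Proof. by move=> a b c; rewrite ![tmul _ c]tmulC tmul_taddr. Qed.

Lemma tadd_tdiv (a c : T) (b d : RR) :
  tadd (tdiv a (Some b)) (tdiv c (Some d)) =
  tdiv (tadd (tmul a (Some d)) (tmul c (Some b))) (Some (b + d)).
Proof.
case: a => [a|]; case: c => [c|] //=; congr Some; try lra.
by rewrite addr_maxl; congr Num.max; lra.
Qed.

Lemma tmul_tdiv (a c : T) (b d : RR) :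
  tmul (tdiv a (Some b)) (tdiv c (Some d)) = tdiv (tmul a c) (Some (b + d)).
Proof. by case: a => [a|]; case: c => [c|] //=; congr Some; lra. Qed.

Lemma tdiv_tdiv (a : T) (b c d : RR) :
  tdiv (tdiv a (Some b)) (tdiv (Some c) (Some d)) =
  tdiv (tmul a (Some d)) (Some (b + c)).
Proof. by case: a => [a|] //=; congr Some; lra. Qed.

Section TropicalPolynomials.
Variable n : nat.
Implicit Types (s t : tmono n) (p q : tpoly n) (x : 'rV[RR]_n).

Definition tmono_cst (c : RR) : tmono n := (c, [ffun => 0%N]).

Definition tmono_mul s t : tmono n := (s.1 + t.1, [ffun i => (s.2 i + t.2 i)%N]).

Fixpoint tpoly_mul p q : tpoly n :=
  if p is s :: p' then map (tmono_mul s) q ++ tpoly_mul p' q else [::].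

Lemma mono_eval_cst c x : mono_eval (tmono_cst c) x = c.
Proof.
rewrite /mono_eval big1 ?addr0 // => i _.
by rewrite ffunE mul0r.
Qed.

Lemma mono_eval_mul s t x :
  mono_eval (tmono_mul s t) x = mono_eval s x + mono_eval t x.
Proof.
rewrite /mono_eval /=.
under eq_bigr do rewrite ffunE natrD mulrDl.
by rewrite big_split /=; lra.
Qed.

Lemma peval_cons t p x : peval (t :: p) x = tadd (Some (mono_eval t x)) (peval p x).
Proof. by []. Qed.

Lemma peval_cat p q x : peval (p ++ q) x = tadd (peval p x) (peval q x).
Proof. by elim: p => [|t p IHp] //; rewrite cat_cons !peval_cons IHp taddA. Qed.

Lemma peval_map_mul s q x :
  peval (map (tmono_mul s) q) x = tmul (Some (mono_eval s x)) (peval q x).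
Proof.
elim: q => [|t q IHq] //.
by rewrite map_cons !peval_cons IHq tmul_taddr mono_eval_mul.
Qed.

Lemma peval_mul p q x : peval (tpoly_mul p q) x = tmul (peval p x) (peval q x).
Proof.
elim: p => [|s p IHp] //.
by rewrite [tpoly_mul _ _]/= peval_cat peval_map_mul IHp peval_cons tmul_taddl.
Qed.

Lemma peval_Some p x : p <> [::] -> exists v, peval p x = Some v.
Proof. by case: p => // t p _ /=; case: (peval p x) => /=; eauto. Qed.

Lemma tpoly_mul_neq_nil p q : p <> [::] -> q <> [::] -> tpoly_mul p q <> [::].
Proof. by case: p => // s p _; case: q. Qed.

End TropicalPolynomials.

Arguments tmono_cst {n} c.

Lemma revalE n (r : trat n) x : reval r x = tdiv (peval (tnum r) x) (peval (tden r) x).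
Proof. by []. Qed.

Section TropicalRationalFunctions.
Variables (k : nat) (W : set 'rV[RR]_k).
Implicit Types g : W -> T.

Lemma eq_QT g g' : g =1 g' -> QT W g -> QT W g'.
Proof. by move=> eq_g [r Hr]; exists r => y; rewrite -eq_g. Qed.

Lemma QT_cst (c : T) : QT W (fconst W c).
Proof.
have one_neq_nil : [:: tmono_cst 0] <> [::] :> tpoly k by [].
case: c => [c|]; last by exists (Trat [::] one_neq_nil).
exists (Trat [:: tmono_cst c] one_neq_nil) => y.
by rewrite revalE /= !mono_eval_cst subr0.
Qed.

Lemma QT_add g g' : QT W g -> QT W g' -> QT W (fadd g g').
Proof.
move=> [[p q q_neq_nil] Hg] [[p' q' q'_neq_nil] Hg'].
exists (Trat (tpoly_mul p q' ++ tpoly_mul p' q) (tpoly_mul_neq_nil q_neq_nil q'_neq_nil)).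
move=> y; rewrite /fadd Hg Hg' !revalE /= peval_cat !peval_mul.
have [b ->] := peval_Some (\val y) q_neq_nil.
have [d ->] := peval_Some (\val y) q'_neq_nil.
exact: tadd_tdiv.
Qed.

Lemma QT_mul g g' : QT W g -> QT W g' -> QT W (fmul g g').
Proof.
move=> [[p q q_neq_nil] Hg] [[p' q' q'_neq_nil] Hg'].
exists (Trat (tpoly_mul p p') (tpoly_mul_neq_nil q_neq_nil q'_neq_nil)).
move=> y; rewrite /fmul Hg Hg' !revalE /= !peval_mul.
have [b ->] := peval_Some (\val y) q_neq_nil.
have [d ->] := peval_Some (\val y) q'_neq_nil.
exact: tmul_tdiv.
Qed.

(* If the numerator p' of g' is the zero polynomial, g' is -oo everywhere, so
   W is empty and any representative will do. *)
Lemma QT_div g g' : QT W g -> QT W g' -> (forall y, g' y <> None) ->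
  QT W (fun y => tdiv (g y) (g' y)).
Proof.
move=> [[p q q_neq_nil] Hg] [[p' q' q'_neq_nil] Hg'] g'_finite.
have [p'_nil|p'_neq_nil] := eqVneq p' [::].
  by exists (Trat p q_neq_nil) => y; have := g'_finite y; rewrite Hg' revalE p'_nil.
have {}p'_neq_nil : p' <> [::] by apply/eqP.
exists (Trat (tpoly_mul p q') (tpoly_mul_neq_nil q_neq_nil p'_neq_nil)).
move=> y; rewrite Hg Hg' !revalE /= !peval_mul.
have [b ->] := peval_Some (\val y) q_neq_nil.
have [c ->] := peval_Some (\val y) p'_neq_nil.
have [d ->] := peval_Some (\val y) q'_neq_nil.
exact: tdiv_tdiv.
Qed.

Lemma QT_natmul (j : nat) (g : W -> RR) :
  QT W (fun y => Some (g y)) -> QT W (fun y => Some (j%:R * g y)).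
Proof.
move=> QTg; elim: j => [|j IHj].
  by apply: eq_QT (QT_cst (Some 0)) => y; rewrite mul0r.
by apply: eq_QT (QT_mul QTg IHj) => y; rewrite /fmul /= mulrS mulrDl mul1r.
Qed.

Lemma QT_sum (I : Type) (s : seq I) (G : I -> W -> RR) :
  (forall i, QT W (fun y => Some (G i y))) -> QT W (fun y => Some (\sum_(i <- s) G i y)).
Proof.
move=> QTG; elim: s => [|i s IHs].
  by apply: eq_QT (QT_cst (Some 0)) => y; rewrite big_nil.
by apply: eq_QT (QT_mul (QTG i) IHs) => y; rewrite big_cons.
Qed.

Section Substitution.
Variables (n : nat) (x : W -> 'rV[RR]_n).
Hypothesis QT_coord : forall i, QT W (fun y => Some (x y ord0 i)).

Lemma QT_mono_eval (t : tmono n) : QT W (fun y => Some (mono_eval t (x y))).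
Proof.
have QT_sum_coord : QT W (fun y => Some (\sum_i (t.2 i)%:R * x y ord0 i)).
  by apply: QT_sum => i; apply: QT_natmul.
by apply: eq_QT (QT_mul (QT_cst (Some t.1)) QT_sum_coord) => y.
Qed.

Lemma QT_peval (p : tpoly n) : QT W (fun y => peval p (x y)).
Proof.
elim: p => [|t p IHp]; first exact: QT_cst None.
exact: QT_add (QT_mono_eval t) IHp.
Qed.

Lemma QT_reval (r : trat n) : QT W (fun y => reval r (x y)).
Proof.
apply: QT_div (QT_peval _) (QT_peval _) _ => y.
by have [v ->] := peval_Some (x y) (@tden_nz _ r).
Qed.

End Substitution.

Lemma QT_comp n (V : set 'rV[RR]_n) (theta : W -> V) :
  (forall i, QT W (fun y => Some (\val (theta y) ord0 i))) ->
  forall h, QT V h -> QT W (h \o theta).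
Proof.
move=> QT_coord h [r Hh].
by apply: eq_QT (QT_reval QT_coord r) => y; rewrite /= Hh.
Qed.

End TropicalRationalFunctions.

Lemma comp_inj_surj (A B C : Type) (theta : A -> B) (h h' : B -> C) :
  (forall b, exists a, theta a = b) -> h \o theta = h' \o theta -> h = h'.
Proof.
move=> theta_surj eq_comp; apply: funext => b.
by have [a <-] := theta_surj b; apply: (congr1 (@^~ a) eq_comp).
Qed.

Theorem proposition3p21 (n m : nat) (V : set 'rV[RR]_n) (W : set 'rV[RR]_m)
    (f : 'I_n -> trat m) (theta : W -> V) :
  W !=set0 ->
  (* theta(y) = (f_1(y),...,f_n(y)), and its image is contained in V *)
  (forall (y : W) (i : 'I_n), reval (f i) (\val y) = Some (\val (theta y) ord0 i)) ->
  let thstar := fun h : V -> T => h \o theta in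
  [/\ (* (1) *) V !=set0,
      (* (2) *) (forall h, QT V h -> QT W (thstar h)),
      (* (3) *) [/\ forall c : T, thstar (fconst V c) = fconst W c,
                    forall h h', QT V h -> QT V h' ->
                      thstar (fadd h h') = fadd (thstar h) (thstar h')
                  & forall h h', QT V h -> QT V h' ->
                      thstar (fmul h h') = fmul (thstar h) (thstar h')],
      (* (4) *) ((forall x : V, exists y : W, theta y = x) ->
                 forall h h', QT V h -> QT V h' -> thstar h = thstar h' -> h = h')
    & (* (5) *) ((exists (psi : V -> W) (g : 'I_m -> trat n),
                   [/\ cancel theta psi, cancel psi theta,
                       continuous theta, continuous psi
                     & forall (x : V) (j : 'I_m),
                         reval (g j) (\val x) = Some (\val (psi x) ord0 j)]) ->
                 [/\ forall h, QT V h -> QT W (thstar h),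
                     forall h h', QT V h -> QT V h' -> thstar h = thstar h' -> h = h'
                   & forall k, QT W k -> exists2 h, QT V h & thstar h = k])].
Proof.
move=> [y0 Wy0] f_theta thstar.
have QT_thstar : forall h, QT V h -> QT W (thstar h).
  by apply: QT_comp => i; exists (f i) => y; rewrite f_theta.
have thstar_inj : (forall x : V, exists y : W, theta y = x) ->
    forall h h', QT V h -> QT V h' -> thstar h = thstar h' -> h = h'.
  by move=> theta_surj h h' _ _; apply: comp_inj_surj.
split => //.
  by exists (\val (theta (exist _ y0 (mem_set Wy0)))); apply: set_mem (valP _).
move=> [psi [g [thetaK psiK _ _ g_psi]]]; split => //.
  by apply: thstar_inj => x; exists (psi x); rewrite psiK.
move=> k QTk; exists (k \o psi).
  by apply: QT_comp QTk => j; exists (g j) => x; rewrite g_psi.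
by apply: funext => y; rewrite /thstar /= thetaK.
Qed.
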